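(* With $f$ as in the context (and $n\ge 3$), every $g\in G$ satisfies $\langle v_0\rangle g=\langle v_0\rangle$.
   Context: Let $p$ be a prime, $\mathbb{F}=\mathrm{GF}(p)$, and $n\ge 3$. Let $V$ be an $\mathbb{F}$-vector space with basis $v_0,\dots,v_n$, $U=\langle v_1,\dots,v_n\rangle$, $W=\Lambda^2V$. Maps are written on the right. For $g\in\mathrm{End}(V)$, $\widehat g$ denotes the induced linear map of $W$, $(x\wedge y)\widehat g=(xg)\wedge(yg)$. The linear map $f:V\to W$ is given by $v_0f=\sum_{i=1}^n b_i\, v_0\wedge v_i+\sum_{1\le j<k\le n}c_{j,k}\, v_j\wedge v_k$ and $v_if=\sum_{j=1}^n A_{i,j}\, v_0\wedge v_j$ for $1\le i\le n$, where $b\in\mathbb{F}^n$ and $c=(c_{j,k})\in\mathbb{F}^{\binom n2}$ are nonzero, and $A$ is the $n\times n$ companion matrix of the minimal polynomial over $\mathbb{F}$ of a primitive element of $\mathrm{GF}(p^n)$. Let $G=\{g\in \mathrm{GL}(V) : (vg)f=(vf)\widehat{g}\ \text{for all } v\in V\}$. *)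

From HB Require Import structures.
From mathcomp Require Import all_boot all_order all_algebra all_fingroup all_field.
Set Implicit Arguments. Unset Strict Implicit. Unset Printing Implicit Defensive.
Import GRing.Theory.
Local Open Scope ring_scope.

(* V = F^(n+1) as row vectors, basis vectors v_0 = e ord0, v_i = e (lift ord0 i'). 
   Maps act on the right: v |-> v *m g. *)
Definition evec (F : nzRingType) (m : nat) (i : 'I_m) : 'rV[F]_m := delta_mx 0 i.

(* W = Lambda^2 V is modelled as the space of alternating m x m matrices:
   x /\ y  |->  x^T y - y^T x. *)
Definition wedge (F : comNzRingType) (m : nat) (x y : 'rV[F]_m) : 'M[F]_m :=
  x^T *m y - y^T *m x.

(* The induced map g^ on Lambda^2 V: (x /\ y) g^ = (x g) /\ (y g), i.e. M |-> g^T M g. *)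
Definition hatmap (F : comNzRingType) (m : nat) (g : 'M[F]_m) (M : 'M[F]_m) : 'M[F]_m :=
  g^T *m M *m g.

(* The map f : V -> W of the paper, for b in F^n, c = (c_{j,k})_{j<k} (only the
   strictly upper triangular entries of the matrix c are used) and A in M_n(F). *)
Definition fmap (F : comNzRingType) (n : nat) (b : 'rV[F]_n) (c A : 'M[F]_n)
    (v : 'rV[F]_n.+1) : 'M[F]_n.+1 :=
  let e := @evec F n.+1 in
  let f0 := \sum_(i < n) b 0 i *: wedge (e ord0) (e (lift ord0 i))
          + \sum_(j < n) \sum_(k < n | (j < k)%N) c j k *: wedge (e (lift ord0 j)) (e (lift ord0 k)) in
  let fi (i : 'I_n) := \sum_(j < n) A i j *: wedge (e ord0) (e (lift ord0 j)) in
  v 0 ord0 *: f0 + \sum_(i < n) v 0 (lift ord0 i) *: fi i.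

(* The companion matrix of a polynomial q of size n+1, written out entrywise;
   this is exactly MathComp's [companionmx q] (mxpoly.v), which has type
   'M_((size q).-1), re-indexed at dimension n. *)
Definition companion_n (F : nzRingType) (n : nat) (q : {poly F}) : 'M[F]_n :=
  \matrix_(i < n, j < n)
    if (i == n.-1 :> nat) then - q`_j else (i.+1 == j :> nat)%:R.

Definition Fp_emb (p : nat) (L : nzRingType) (x : 'F_p) : L := (val x)%:R.

Definition primitive_elt (L : finFieldType) (z : L) : Prop :=
  forall y : L, y != 0 -> exists k : nat, y = z ^+ k.

Definition minpoly_Fp (p : nat) (L : fieldType) (z : L) (q : {poly 'F_p}) : Prop :=
  [/\ q \is monic, root (map_poly (@Fp_emb p L) q) z &
      forall r : {poly 'F_p}, r != 0 -> root (map_poly (@Fp_emb p L) r) z ->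
        (size q <= size r)%N].

From HB Require Import structures.
From mathcomp Require Import all_boot all_order all_algebra all_fingroup all_field.
From mathcomp Require Import zify ring.
Set Implicit Arguments. Unset Strict Implicit. Unset Printing Implicit Defensive.
Import GRing.Theory.
Local Open Scope ring_scope.

(* For u in U = <v_1, ..., v_n>, uf = v_0 /\ (u Phi) with Phi = diag(1, A), and
   Phi is invertible because the constant term of the minimal polynomial of the
   nonzero element z is nonzero.  If v_0 g had a nonzero component y in U, then
   for u in U with ug in U the relation (ug)f = (uf)g^ reads
   v_0 /\ (ug)Phi = (v_0 g) /\ (u Phi g), which forces (ug)Phi to be a multiple of
   y.  But Ug :&: U has dimension at least n - 1 >= 2 and Phi is injective, a
   contradiction; so v_0 g is a (nonzero) multiple of v_0. *)

Lemma mul_lift0_mx (R : comNzRingType) n (A : 'M[R]_n) (v : 'rV[R]_(1 + n)) :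
  v *m lift0_mx A = row_mx (lsubmx v) (rsubmx v *m A).
Proof.
by rewrite -{1}(hsubmxK v) mul_row_block !mulmx0 mulmx1 addr0 add0r.
Qed.

Lemma mul_lift0_mx0 (R : comNzRingType) n (A : 'M[R]_n) (v : 'rV[R]_n.+1) :
  (v *m lift0_mx A) 0 ord0 = v 0 ord0.
Proof.
have -> : @ord0 n = lshift n 0 :> 'I_(1 + n) by apply: val_inj.
by rewrite mul_lift0_mx (@row_mxEl _ 1 1 n) mxE.
Qed.

Lemma mul_lift0_mxS (R : comNzRingType) n (A : 'M[R]_n) (v : 'rV[R]_n.+1) j :
  (v *m lift0_mx A) 0 (lift ord0 j) = \sum_i v 0 (lift ord0 i) * A i j.
Proof.
rewrite mul_lift0_mx -rshift1 row_mxEr mxE; apply: eq_bigr => i _.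
by rewrite mxE rshift1.
Qed.

Lemma row_free_lift0_mx (F : fieldType) n (A : 'M[F]_n) :
  row_free A -> row_free (lift0_mx A).
Proof. by rewrite /row_free rank_diag_block_mx mxrank1 => /eqP ->. Qed.

Section Wedge.
Variable F : comNzRingType.

Lemma evecE m (i : 'I_m) j : evec F i 0 j = (j == i)%:R.
Proof. by rewrite /evec mxE eqxx. Qed.

Lemma evec_neq0 m (i : 'I_m) : evec F i != 0.
Proof. by apply/eqP => /rowP /(_ i) /eqP; rewrite evecE eqxx mxE oner_eq0. Qed.

Lemma wedgeE m (x y : 'rV[F]_m) i j : wedge x y i j = x 0 i * y 0 j - y 0 i * x 0 j.
Proof. by rewrite /wedge !mxE !big_ord1 !mxE. Qed.

Lemma hatmap_wedge m (g : 'M[F]_m) x y : hatmap g (wedge x y) = wedge (x *m g) (y *m g).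
Proof. by rewrite /hatmap /wedge mulmxBr mulmxBl !trmx_mul !mulmxA. Qed.

Lemma wedge_sumr m (x : 'rV[F]_m) I (r : seq I) (P : pred I) (G : I -> 'rV_m) :
  wedge x (\sum_(i <- r | P i) G i) = \sum_(i <- r | P i) wedge x (G i).
Proof.
apply: (big_morph (wedge x)) => [y z|]; last by rewrite /wedge trmx0 mulmx0 mul0mx subr0.
by rewrite /wedge mulmxDr [(y + z)^T]linearD /= mulmxDl opprD addrACA.
Qed.

Lemma wedge_scaler m (x : 'rV[F]_m) a y : wedge x (a *: y) = a *: wedge x y.
Proof. by rewrite /wedge -scalemxAr [(a *: y)^T]linearZ /= -scalemxAl scalerBr. Qed.

Lemma fmap_U n (b : 'rV[F]_n) (c A : 'M[F]_n) (v : 'rV[F]_n.+1) : v 0 ord0 = 0 ->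
  fmap b c A v = wedge (evec F ord0) (v *m lift0_mx A).
Proof.
move=> v0; rewrite /fmap v0 scale0r add0r.
have -> : v *m lift0_mx A =
    \sum_(i < n) \sum_(j < n) (v 0 (lift ord0 i) * A i j) *: evec F (lift ord0 j).
  apply/rowP => l; rewrite summxE; case: (unliftP ord0 l) => [l'|] ->.
    rewrite mul_lift0_mxS; apply: eq_bigr => i _; rewrite summxE (bigD1 l') //= big1.
      by rewrite !mxE !eqxx addr0 mulr1.
    by move=> j /negbTE jl; rewrite !mxE (inj_eq lift_inj) eq_sym jl mulr0.
  rewrite mul_lift0_mx0 v0 big1 // => i _; rewrite summxE big1 // => j _.
  by rewrite !mxE (negbTE (neq_lift _ _)) andbF mulr0.
rewrite wedge_sumr; apply: eq_bigr => i _.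
rewrite wedge_sumr scaler_sumr; apply: eq_bigr => j _.
by rewrite wedge_scaler scalerA.
Qed.

End Wedge.

Section HyperplaneComponent.
Variables (F : fieldType) (m : nat).
Implicit Types (a y z : 'rV[F]_m.+1).

Definition proj_U y := y - y 0 ord0 *: evec F ord0.

Lemma proj_U0 y : proj_U y 0 ord0 = 0.
Proof. by rewrite !mxE !eqxx mulr1 subrr. Qed.

Lemma proj_U_lift y j : proj_U y 0 (lift ord0 j) = y 0 (lift ord0 j).
Proof. by rewrite !mxE eqxx eq_sym (negbTE (neq_lift _ _)) mulr0 subr0. Qed.

Lemma wedge_evec0_sub a y z (k : 'I_m) :
  a 0 ord0 = 0 -> y 0 (lift ord0 k) != 0 -> wedge (evec F ord0) a = wedge y z ->
  (a <= proj_U y)%MS.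
Proof.
move=> a0 yk E; set k' := lift ord0 k in yk.
pose lam := y 0 ord0 * z 0 k' / y 0 k' - z 0 ord0.
suff -> : a = lam *: proj_U y by apply: scalemx_sub.
(* Entries (k', j) and (0, j) of the equation give z_j = z_k' y_j / y_k' and
   a_j = y_0 z_j - z_0 y_j. *)
apply/rowP => j; rewrite mxE; case: (unliftP ord0 j) => [j'|] ->; last first.
  by rewrite proj_U0 mulr0.
rewrite proj_U_lift; set j'' := lift ord0 j'.
have e1 := congr1 (fun M : 'M_m.+1 => M k' j'') E.
have e2 := congr1 (fun M : 'M_m.+1 => M ord0 j'') E.
move: e1 e2; rewrite !wedgeE !evecE eqxx ![_ == ord0]eq_sym !(negbTE (neq_lift _ _)).
rewrite !mul0r !mulr0 mul1r !subr0 => /eqP; rewrite eq_sym subr_eq0 => /eqP e1 ->.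
have -> : z 0 j'' = z 0 k' * y 0 j'' / y 0 k' by rewrite -e1; field.
by rewrite /lam; field.
Qed.

Lemma sub_ker_evec0 y : (y <= kermx (evec F ord0)^T)%MS = (y 0 ord0 == 0).
Proof.
rewrite sub_kermx.
have -> : y *m (evec F ord0)^T = (y 0 ord0)%:M.
  apply/matrixP => i j; rewrite !ord1 !mxE (bigD1 ord0) //= big1 ?addr0.
    by rewrite !mxE eqxx mulr1.
  by move=> k nk; rewrite !mxE (negbTE nk) mulr0.
apply/eqP/eqP => [h|->]; last by rewrite raddf0.
by have := congr1 (fun M : 'M[F]_1 => M 0 0) h; rewrite !mxE eqxx.
Qed.

Lemma rank_ker_evec0 : \rank (kermx (evec F (@ord0 m))^T) = m.
Proof. by rewrite mxrank_ker mxrank_tr /evec mxrank_delta subn1. Qed.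

Lemma eqmx_evec0 y : y != 0 -> proj_U y = 0 -> (y == evec F ord0)%MS.
Proof.
move=> y_neq0 /eqP; rewrite subr_eq0 => /eqP ye.
have y0 : y 0 ord0 != 0 by apply: contraNneq y_neq0 => y0; rewrite ye y0 scale0r.
by rewrite ye; apply/eqmxP; apply: eqmx_scale.
Qed.

End HyperplaneComponent.

Lemma row_free_companion_n (F : fieldType) n (q : {poly F}) :
  (0 < n)%N -> q`_0 != 0 -> row_free (companion_n n q).
Proof.
move=> n_gt0 q0; rewrite -kermx_eq0; apply/rowV0P => v /sub_kermxP vA.
have last_lt : (n.-1 < n)%N by rewrite prednK.
pose l := Ordinal last_lt.
have neq_l (i : 'I_n) : (i != l) = (i != n.-1 :> nat) by [].
have vAE j : (v *m companion_n n q) 0 j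
    = v 0 l * - q`_j + \sum_(i < n | i != l) v 0 i * (i.+1 == j)%:R.
  rewrite mxE (bigD1 l) //= !mxE eqxx; congr (_ + _); apply: eq_bigr => i.
  by rewrite neq_l !mxE => /negbTE ->.
have vl : v 0 l = 0.
  move/eqP: (vAE (Ordinal n_gt0)); rewrite vA mxE big1 => [|i _]; last by rewrite mulr0.
  by rewrite addr0 eq_sym mulf_eq0 oppr_eq0 (negbTE q0) orbF => /eqP.
apply/rowP => i; rewrite mxE; have [->//|i_neq_l] := eqVneq i l.
have i1_lt : (i.+1 < n)%N by move: i_neq_l; rewrite neq_l; have := ltn_ord i; lia.
move: (vAE (Ordinal i1_lt)); rewrite vA mxE vl mul0r add0r (bigD1 i) //= eqxx mulr1.
rewrite big1 ?addr0 // => i' /andP [_ ne]; rewrite eqSS.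
by rewrite (_ : (i' == i :> nat) = false) ?mulr0 //; apply/negbTE.
Qed.

Lemma primitive_elt_neq0 (L : finFieldType) (z : L) :
  (2 < #|L|)%N -> primitive_elt z -> z != 0.
Proof.
move=> L_gt2 hz; apply: contraTneq L_gt2 => z0; rewrite -leqNgt.
have sub01 : [set: L] \subset [set 0; 1].
  apply/subsetP => y _; rewrite !inE; have [//|y_neq0] := eqVneq y 0.
  have [k yk] := hz y y_neq0; move: y_neq0; rewrite yk z0 expr0n.
  by case: (k == 0%N); rewrite ?eqxx.
by rewrite -cardsT (leq_trans (subset_leq_card sub01)) // cards2; case: (_ != _).
Qed.

Lemma minpoly_Fp_coef0 p (L : fieldType) (z : L) (q : {poly 'F_p}) :
  z != 0 -> minpoly_Fp z q -> q`_0 != 0.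
Proof.
move=> z_neq0 [q_monic q_root q_min]; apply/negP => /eqP q0.
set r := drop_poly 1 q.
have qE : q = r * 'X.
  rewrite -[LHS](poly_take_drop 1) (_ : take_poly 1 q = 0) ?add0r //.
  by apply/polyP => i; rewrite coef_take_poly coef0; case: i.
have r_neq0 : r != 0 by apply: contraTneq (monic_neq0 q_monic) => r0; rewrite qE r0 mul0r eqxx.
have emb0 : Fp_emb L 0 = 0 by rewrite /Fp_emb.
have mapE : map_poly (@Fp_emb p L) q = map_poly (@Fp_emb p L) r * 'X.
  apply/polyP => i; rewrite coefMX !coef_map_id0 // qE coefMX.
  by case: (i == 0%N).
have root_r : root (map_poly (@Fp_emb p L) r) z.
  by move: q_root; rewrite /root mapE hornerMX mulf_eq0 (negbTE z_neq0) orbF.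
by have := q_min r r_neq0 root_r; rewrite {1}qE size_mulX // ltnn.
Qed.

Section HyperplaneStabilizer.
Variables (F : fieldType) (n : nat) (A : 'M[F]_n) (g : 'M[F]_n.+1).
Hypotheses (A_free : row_free A) (g_free : row_free g).
Hypothesis wedge_g : forall v : 'rV_n.+1, v 0 ord0 = 0 -> (v *m g) 0 ord0 = 0 ->
  wedge (evec F ord0) (v *m g *m lift0_mx A)
  = wedge (evec F ord0 *m g) (v *m lift0_mx A *m g).

Let U := kermx (evec F (@ord0 n))^T.

Lemma capmx_U_sub_proj_U (k : 'I_n) : (evec F ord0 *m g) 0 (lift ord0 k) != 0 ->
  ((U *m g :&: U) *m lift0_mx A <= proj_U (evec F ord0 *m g))%MS.
Proof.
move=> yk; apply/row_subP => i; rewrite row_mul.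
have := row_sub i (U *m g :&: U)%MS; rewrite sub_capmx => /andP [/submxP [w ->] r_U].
rewrite mulmxA in r_U *; apply: (wedge_evec0_sub _ yk).
- by rewrite mul_lift0_mx0; apply/eqP; rewrite -sub_ker_evec0.
- by apply: wedge_g; apply/eqP; rewrite -sub_ker_evec0 // submxMl.
Qed.

Lemma proj_U_evec0_mul_eq0 : (2 < n)%N -> proj_U (evec F ord0 *m g) = 0.
Proof.
move=> n_gt2; apply/rowP => j; rewrite [RHS]mxE.
case: (unliftP ord0 j) => [k|] ->; last exact: proj_U0.
rewrite proj_U_lift; apply/eqP/negPn/negP => /capmx_U_sub_proj_U /mxrankS.
move=> /leq_trans /(_ (rank_leq_row _)); rewrite mxrankMfree ?row_free_lift0_mx // => cap_le1.
have := mxrank_sum_cap (U *m g) U; rewrite mxrankMfree // rank_ker_evec0.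
have := rank_leq_col (U *m g + U)%MS; lia.
Qed.

End HyperplaneStabilizer.

Theorem lemma3p2 (p n : nat) (hp : prime p) (hn : (3 <= n)%N)
  (L : finFieldType) (hL : #|L| = (p ^ n)%N) (z : L) (hz : primitive_elt z)
  (q : {poly 'F_p}) (hq : minpoly_Fp z q)
  (b : 'rV['F_p]_n) (hb : b != 0)
  (c : 'M['F_p]_n) (hc : exists j k : 'I_n, (j < k)%N /\ c j k != 0)
  (g : 'M['F_p]_n.+1) (hg : g \in unitmx)
  (hG : forall v : 'rV['F_p]_n.+1,
          fmap b c (companion_n n q) (v *m g) = hatmap g (fmap b c (companion_n n q) v)) :
  (evec 'F_p ord0 *m g == evec 'F_p (@ord0 n))%MS.
Proof.
have L_gt2 : (2 < #|L|)%N by rewrite hL (leq_trans hn) // ltnW // ltn_expl // prime_gt1.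
have q0 := minpoly_Fp_coef0 (primitive_elt_neq0 L_gt2 hz) hq.
have A_free : row_free (companion_n n q) by apply: row_free_companion_n; first lia.
have g_free : row_free g by rewrite row_free_unit.
apply: eqmx_evec0.
  by rewrite mulmx_free_eq0 // evec_neq0.
apply: (proj_U_evec0_mul_eq0 A_free g_free) => [v v0 vg0|]; last lia.
by rewrite -(fmap_U b c) // hG fmap_U // hatmap_wedge.
Qed.
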